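(* Let $X,Y$ be complex Banach spaces, let $\mathcal B$ be any family of compact subsets of $X$ such that every $x\in X$ belongs to some $B\in\mathcal B$, let $f:\mathbb R^n\to\mathbb C$ be Bohr almost periodic and let $F:\mathbb R^n\times X\to Y$ be Bohr $\mathcal B$-almost periodic. Then $F_1(\mathbf t;x):=f(\mathbf t)F(\mathbf t;x)$, $\mathbf t\in\mathbb R^n$, $x\in X$, is Bohr $\mathcal B$-almost periodic.
   Context: A continuous $f:\mathbb R^n\to\mathbb C$ is Bohr almost periodic if for every $\epsilon>0$ there is $l>0$ such that every closed ball of radius $l$ in $\mathbb R^n$ contains a $\tau$ with $|f(\mathbf t+\tau)-f(\mathbf t)|\le\epsilon$ for all $\mathbf t$. A continuous $F:\mathbb R^n\times X\to Y$ is Bohr $\mathcal B$-almost periodic if for every $B\in\mathcal B$ and $\epsilon>0$ there exists $l>0$ such that for each $\mathbf t_0\in\mathbb R^n$ there exists $\tau$ with $|\tau-\mathbf t_0|\le l$ and $\|F(\mathbf t+\tau;x)-F(\mathbf t;x)\|_Y\le\epsilon$ for all $\mathbf t\in\mathbb R^n$, $x\in B$. *)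

From HB Require Import structures.
From mathcomp Require Import all_boot all_order all_algebra.
From mathcomp Require Import all_classical all_reals all_analysis.
From mathcomp Require Import complex.
Set Implicit Arguments. Unset Strict Implicit. Unset Printing Implicit Defensive.
Import Order.TTheory GRing.Theory Num.Theory.
Import numFieldTopology.Exports numFieldNormedType.Exports.

(* Equip C := R[i] with its canonical (modulus-induced) topology and its
   structure of normed module over itself, as analysis does for numFieldTypes
   via the R^o alias. *)
HB.instance Definition _ (R : rcfType) := PseudoPointedMetric.copy R[i] (R[i])^o.
HB.instance Definition _ (R : rcfType) := NormedModule.copy R[i] (R[i])^o.
Local Open Scope classical_set_scope.
Local Open Scope ring_scope.

Definition eucl_norm {R : realType} {n : nat} (v : 'rV[R]_n) : R :=
  Num.sqrt (\sum_(i < n) (v ord0 i) ^+ 2).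

Definition bohr_ap {R : realType} {n : nat} (f : 'rV[R]_n -> R[i]) : Prop :=
  continuous f /\
  forall eps : R, 0 < eps -> exists l : R, 0 < l /\
    forall t0 : 'rV[R]_n, exists tau : 'rV[R]_n,
      eucl_norm (tau - t0) <= l /\
      forall t : 'rV[R]_n, `|f (t + tau) - f t| <= (eps%:C)%C.

Definition bohr_B_ap {R : realType} {n : nat}
    {X Y : normedModType R[i]} (BB : set (set X))
    (F : 'rV[R]_n * X -> Y) : Prop :=
  continuous F /\
  forall B, BB B -> forall eps : R, 0 < eps -> exists l : R, 0 < l /\
    forall t0 : 'rV[R]_n, exists tau : 'rV[R]_n,
      eucl_norm (tau - t0) <= l /\
      forall t : 'rV[R]_n, forall x : X, B x ->
        `|F (t + tau, x) - F (t, x)| <= (eps%:C)%C.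

(* If f is bounded and uniformly continuous and F is bounded on R^n x B, the
   estimate |f' F' - f F| <= |f' - f| |F'| + |f| |F' - F| reduces the theorem to
   the existence, for each eps, of a relatively dense set of common eps-periods
   of f and F(.; B).  These come from Bohr's argument: for periods tau1 of F and
   tau2 of f near t0, the difference tau1 - tau2 ranges in a fixed compact ball;
   fixing one representative pair (s1, s2) for each cell of a fine finite net of
   that ball, tau1 - s1 is a period of F, and by uniform continuity of f it is
   also a period of f, since it is close to the period tau2 - s2 of f. *)

From HB Require Import structures.
From mathcomp Require Import all_boot all_order all_algebra.
From mathcomp Require Import all_classical all_reals all_analysis.
From mathcomp Require Import complex lra finmap.
Import Order.TTheory GRing.Theory Num.Theory.
Import numFieldTopology.Exports numFieldNormedType.Exports.
Local Open Scope classical_set_scope.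
Local Open Scope ring_scope.
(* The normed spaces are over C = R[i], so norms are complex numbers with zero
   imaginary part; estimates are carried out on their real parts. *)
Local Notation "`‖ y ‖" := (complex.Re `|y|) (at level 0, y at level 99, format "`‖ y ‖").

Section RealPartOfNorm.
Context {R : realType} {V : normedModType R[i]}.
Implicit Types (x y z : V) (e : R).

Lemma normr_Re y : `|y| = (`‖y‖)%:C%C.
Proof. by have := ger0_Im (normr_ge0 y); case: `|y| => a b /= ->. Qed.

Lemma Re_normr_ge0 y : 0 <= `‖y‖.
Proof. by rewrite -ler0c -normr_Re. Qed.

Lemma ler_normr_Re y e : (`|y| <= e%:C%C) = (`‖y‖ <= e).
Proof. by rewrite normr_Re lecR. Qed.

Lemma ltr_normr_Re y e : (`|y| < e%:C%C) = (`‖y‖ < e).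
Proof. by rewrite normr_Re ltcR. Qed.

Lemma Re_ler_normD x y : `‖x + y‖ <= `‖x‖ + `‖y‖.
Proof. by rewrite -lecR rmorphD /= -!normr_Re ler_normD. Qed.

Lemma Re_normrZ (a : R[i]) y : `‖a *: y‖ = `‖a‖ * `‖y‖.
Proof. by apply: complexI; rewrite -normr_Re normrZ rmorphM /= -!normr_Re. Qed.

Lemma Re_distrC x y : `‖x - y‖ = `‖y - x‖.
Proof. by rewrite distrC. Qed.

Lemma Re_ler_distD x y z : `‖x - z‖ <= `‖x - y‖ + `‖y - z‖.
Proof. by rewrite -[x - z](subrKA y) Re_ler_normD. Qed.

Lemma Re_distrZ (a a' : R[i]) y y' :
  `‖a' *: y' - a *: y‖ <= `‖a' - a‖ * `‖y'‖ + `‖a‖ * `‖y' - y‖.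
Proof.
rewrite -Re_normrZ -Re_normrZ scalerBl scalerBr -[a' *: y' - _](subrKA (a *: y')).
exact: Re_ler_normD.
Qed.

End RealPartOfNorm.

Section EuclideanNorm.
Context {R : realType} {n : nat}.
Implicit Types v : 'rV[R]_n.

Lemma mx_normr_le_eucl v : `|v| <= eucl_norm v.
Proof.
rewrite [leLHS]/Num.norm /= mx_normrE; apply/bigmax_leP; split=> [|[i j] _ /=].
  exact: sqrtr_ge0.
rewrite (ord1 i) -sqrtr_sqr ler_sqrt; last by apply: sumr_ge0 => k _; exact: sqr_ge0.
by rewrite (bigD1 j) //= lerDl; apply: sumr_ge0 => k _; exact: sqr_ge0.
Qed.

Lemma eucl_norm_le_mx v : eucl_norm v <= n%:R * `|v|.
Proof.
have nv_ge0 : 0 <= n%:R * `|v| by rewrite mulr_ge0.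
rewrite -(ger0_norm nv_ge0) -sqrtr_sqr ler_sqrt ?sqr_ge0 //.
apply: (@le_trans _ _ (\sum_(i < n) `|v| ^+ 2)).
  apply: ler_sum => i _; rewrite -real_normK ?num_real // lerXn2r ?nnegrE //.
  rewrite [leRHS]/Num.norm /= mx_normrE.
  by apply: le_trans (le_bigmax _ _ (ord0, i)).
rewrite sumr_const card_ord -[leLHS]mulr_natl exprMn ler_wpM2r ?sqr_ge0 //.
by rewrite -natrX ler_nat; case: n => // m; rewrite expnS leq_pmulr.
Qed.

End EuclideanNorm.

Definition reldense {R : realType} {n : nat} (P : 'rV[R]_n -> Prop) :=
  exists2 l : R, 0 < l & forall t0, exists2 tau, `|tau - t0| <= l & P tau.

Section RowSpace.
Context {R : realType} {n : nat}.
Implicit Types (P : 'rV[R]_n -> Prop) (r : R).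

Lemma reldense_euclP P : reldense P <->
  exists l : R, 0 < l /\ forall t0, exists tau, eucl_norm (tau - t0) <= l /\ P tau.
Proof.
split=> [[l l_gt0 Pl] | [l [l_gt0 Pl]]]; last first.
  exists l => // t0; have [tau [tau_t0 Ptau]] := Pl t0.
  by exists tau => //; apply: le_trans (mx_normr_le_eucl _) tau_t0.
exists (n%:R * l + 1); split=> [|t0]; first by rewrite ltr_wpDl ?mulr_ge0 // ltW.
have [tau tau_t0 Ptau] := Pl t0; exists tau; split=> //.
apply: le_trans (eucl_norm_le_mx _) (le_trans (ler_wpM2l (ler0n _ n) tau_t0) _).
by rewrite lerDl.
Qed.

Lemma compact_norm_le r : compact [set t : 'rV[R]_n | `|t| <= r].
Proof.
apply: bounded_closed_compact.
  rewrite /bounded_set /= /bounded_near; near=> M => t /le_trans; apply.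
  by near: M; apply: nbhs_pinfty_ge; exact: num_real.
rewrite -[X in closed X]/(Num.norm @^-1` [set x | x <= r]).
by apply: preimage_closed (@closed_le _ r) => t _; exact: norm_continuous.
Unshelve. all: by end_near.
Qed.

End RowSpace.

Section Compactness.
Context {R : realType} {V : normedModType R[i]}.

Lemma compact_Re_norm_bounded (A : set V) :
  compact A -> exists M, forall y, A y -> `‖y‖ <= M.
Proof.
rewrite compact_cover => Acover.
have A_sub : A `<=` \bigcup_(k in [set: nat]) ball (0 : V) (k%:R)%:C%C.
  move=> y _; exists (Num.truncn `‖y‖).+1 => //.
  by rewrite -ball_normE /= sub0r normrN ltr_normr_Re truncnS_gt.
have [D _ D_sub] := Acover _ _ _ (fun k _ => ball_open _ _) A_sub.
exists (\max_(k : D) fsval k)%:R => y /D_sub[k kD].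
rewrite -ball_normE /= sub0r normrN ltr_normr_Re => /ltW /le_trans; apply.
by rewrite ler_nat (leq_bigmax (FSetSub kD)).
Qed.

Lemma continuous_compact_Re_norm_bounded {T : topologicalType} {g : T -> V}
    {K : set T} :
  continuous g -> compact K -> exists M, forall y, K y -> `‖g y‖ <= M.
Proof.
move=> g_cont /(continuous_compact (continuous_subspaceT g_cont)).
by move=> /compact_Re_norm_bounded[M gM]; exists M => y Ky; apply: gM; exists y.
Qed.

Lemma compact_unif_continuous {U : normedModType R} (h : U -> V) (K : set U) :
  compact K -> continuous h -> forall e, 0 < e ->
  exists2 d, 0 < d & forall y z, K y -> `|y - z| < d -> `‖h y - h z‖ <= e.
Proof.
move=> K_compact h_cont e e_gt0.
have near_cont y : exists d, 0 < d /\
    forall z, `|y - z| < d *+ 2 -> `‖h y - h z‖ <= e / 2.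
  have e2_gt0 : 0 < (e / 2)%:C%C :> R[i] by rewrite ltcR divr_gt0.
  have /(_ _)/nbhs_ballP[d d_gt0 hd] :=
    pseudometric_normed_Zmodule.cvgr_dist_lt _ _ (h_cont y) _ e2_gt0.
  exists (d / 2); split=> [|z]; first by rewrite divr_gt0.
  rewrite mulr2n -splitr => yz.
  by apply: ltW; rewrite -ltr_normr_Re; apply: hd; rewrite -ball_normE.
have [d d_spec] := choice near_cont.
have [D _ K_sub] : finite_subset_cover K (fun y => ball y (d y)) K.
  move: K_compact; rewrite compact_cover; apply=> [y _|y Ky]; first exact: ball_open.
  by exists y => //; apply: ballxx; case: (d_spec y).
pose delta := \big[Num.min/1]_(y : D) d (fsval y).
exists delta => [|y z Ky yz]; first by apply: lt_bigmin => // y _; case: (d_spec (fsval y)).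
have [c cD] := K_sub y Ky; rewrite -ball_normE /= => yc.
have [dc_gt0 hc] := d_spec c.
have delta_le : delta <= d c by exact: (bigmin_le _ (FSetSub cD)).
have cz : `|c - z| < d c *+ 2.
  by have := ler_distD y c z; rewrite mulr2n; lra.
have cy : `|c - y| < d c *+ 2 by rewrite mulr2n; lra.
have := Re_ler_distD (h y) (h c) (h z); rewrite (Re_distrC (h y) (h c)).
have := hc _ cy; have := hc _ cz; lra.
Qed.

End Compactness.

(* The finite-net step of Bohr's common-period argument. *)
Lemma bounded_representatives {R : realType} {U : normedModType R}
    (P1 P2 : U -> Prop) (K : set U) (d : R) :
  compact K -> 0 < d -> exists L, forall t1 t2, P1 t1 -> P2 t2 -> K (t1 - t2) ->
    exists s1 s2, [/\ P1 s1, P2 s2, `|s1| <= L & `|(t1 - s1) - (t2 - s2)| < d].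
Proof.
move=> K_compact d_gt0.
have d2_gt0 : 0 < d / 2 by rewrite divr_gt0.
pose Q y (p : U * U) := [/\ P1 p.1, P2 p.2 & `|y - (p.1 - p.2)| < d / 2].
have /choice[rep repP] : forall y, exists r, forall p, Q y p -> Q y r.
  move=> y; have [[p Qp]|noQ] := pselect (exists p, Q y p).
    by exists p.
  by exists (0, 0) => p Qp; case: noQ; exists p.
have [D _ K_sub] : finite_subset_cover K (fun y => ball y (d / 2)) K.
  move: K_compact; rewrite compact_cover; apply=> [y _|y Ky]; first exact: ball_open.
  by exists y => //; apply: ballxx.
exists (\big[Num.max/0]_(y : D) `|(rep (fsval y)).1|) => t1 t2 P1t1 P2t2 Kt.
have [y yD] := K_sub _ Kt; rewrite -ball_normE /= => yt.
have [P1s1 P2s2 ys] := repP y (t1, t2) (And3 P1t1 P2t2 yt).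
exists (rep y).1, (rep y).2; split=> //; first exact: (le_bigmax _ _ (FSetSub yD)).
rewrite distrC in yt.
have -> : (t1 - (rep y).1) - (t2 - (rep y).2) = (t1 - t2) - ((rep y).1 - (rep y).2).
  by rewrite !opprD addrACA.
by have := ler_distD y (t1 - t2) ((rep y).1 - (rep y).2); lra.
Qed.

Section AlmostPeriodic.
Context {R : realType} {n : nat} {S : Type} {V : normedModType R[i]}.
Implicit Types (A : set S) (G : 'rV[R]_n * S -> V) (h : 'rV[R]_n -> V).

Definition eps_period A G e tau :=
  forall t s, A s -> `‖G (t + tau, s) - G (t, s)‖ <= e.

Definition almost_periodic A G := forall e, 0 < e -> reldense (eps_period A G e).

Definition uniformly_continuous h := forall e, 0 < e ->
  exists2 d, 0 < d & forall t t', `|t - t'| < d -> `‖h t - h t'‖ <= e.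

Lemma eps_periodN {A G e tau} : eps_period A G e tau -> eps_period A G e (- tau).
Proof. by move=> Ptau t s As; have := Ptau (t - tau) s As; rewrite subrK Re_distrC. Qed.

Lemma eps_periodD {A G e1 e2 tau1 tau2} :
  eps_period A G e1 tau1 -> eps_period A G e2 tau2 ->
  eps_period A G (e1 + e2) (tau1 + tau2).
Proof.
move=> P1 P2 t s As; rewrite (addrC tau1) addrA.
exact: le_trans (Re_ler_distD _ (G (t + tau2, s)) _) (lerD (P1 _ _ As) (P2 _ _ As)).
Qed.

Lemma eps_period_near {A h e e' d tau tau'} :
  (forall t t', `|t - t'| < d -> `‖h t - h t'‖ <= e) ->
  eps_period A (fun p => h p.1) e' tau' -> `|tau - tau'| < d ->
  eps_period A (fun p => h p.1) (e + e') tau.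
Proof.
move=> h_uc P' tau_tau' t s As /=.
apply: le_trans (Re_ler_distD _ (h (t + tau')) _) (lerD (h_uc _ _ _) (P' _ _ As)).
by rewrite opprD addrACA subrr add0r.
Qed.

Lemma almost_periodic_bounded A G :
  almost_periodic A G ->
  (forall r, exists M, forall t s, `|t| <= r -> A s -> `‖G (t, s)‖ <= M) ->
  exists M, forall t s, A s -> `‖G (t, s)‖ <= M.
Proof.
move=> G_ap G_loc; have [l _ Pl] := G_ap 1 ltr01; have [M GM] := G_loc l.
exists (M + 1) => t s As; have [tau tau_t P1] := Pl (- t).
rewrite opprK addrC in tau_t.
have := Re_ler_distD (G (t, s)) (G (t + tau, s)) 0; rewrite !subr0 Re_distrC.
by have := P1 t s As; have := GM _ s tau_t As; lra.
Qed.

End AlmostPeriodic.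

Section CommonPeriods.
Context {R : realType} {n : nat} {V W : normedModType R[i]}.

Lemma almost_periodic_uniformly_continuous {h : 'rV[R]_n -> V} :
  continuous h -> almost_periodic [set: unit] (fun p => h p.1) ->
  uniformly_continuous h.
Proof.
move=> h_cont h_ap e e_gt0.
have e3_gt0 : 0 < e / 3 by rewrite divr_gt0.
have [l _ Pl] := h_ap _ e3_gt0.
have [d d_gt0 h_uc] := compact_unif_continuous _ _ (compact_norm_le l) h_cont _ e3_gt0.
exists d => // t t' tt'; have [tau tau_t P] := Pl (- t).
rewrite opprK addrC in tau_t.
have tt'_tau : `|(t + tau) - (t' + tau)| < d by rewrite opprD addrACA subrr addr0.
have := h_uc _ _ tau_t tt'_tau; have := P t tt I; have := P t' tt I => /=.
have := Re_ler_distD (h t) (h (t + tau)) (h t').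
have := Re_ler_distD (h (t + tau)) (h (t' + tau)) (h t').
rewrite (Re_distrC (h t) (h (t + tau))); lra.
Qed.

Lemma reldense_common_eps_periods {S : Type} {A : set S} {G : 'rV[R]_n * S -> V}
    {h : 'rV[R]_n -> W} :
  almost_periodic A G -> almost_periodic A (fun p => h p.1) ->
  uniformly_continuous h -> forall e, 0 < e ->
  reldense (fun tau => eps_period A G e tau /\ eps_period A (fun p => h p.1) e tau).
Proof.
move=> G_ap h_ap h_uc e e_gt0.
have e2_gt0 : 0 < e / 2 by rewrite divr_gt0.
have e3_gt0 : 0 < e / 3 by rewrite divr_gt0.
have [l1 l1_gt0 G_dense] := G_ap _ e2_gt0.
have [l2 _ h_dense] := h_ap _ e3_gt0.
have [d d_gt0 h_d] := h_uc _ e3_gt0.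
have [L reps] := bounded_representatives (eps_period A G (e / 2))
  (eps_period A (fun p => h p.1) (e / 3)) _ _ (compact_norm_le (l1 + l2)) d_gt0.
exists (l1 + `|L|) => [|t0]; first by rewrite ltr_wpDr.
have [tau1 tau1_t0 G_tau1] := G_dense t0; have [tau2 tau2_t0 h_tau2] := h_dense t0.
have tau12 : `|tau1 - tau2| <= l1 + l2.
  by have := ler_distD t0 tau1 tau2; rewrite (distrC t0); lra.
have [s1 [s2 [G_s1 h_s2 s1_L close]]] := reps _ _ G_tau1 h_tau2 tau12.
exists (tau1 - s1); last split.
- rewrite addrAC; have := ler_normB (tau1 - t0) s1; have := ler_norm L; lra.
- by rewrite (splitr e); apply: eps_periodD G_tau1 (eps_periodN G_s1).
have -> : e = e / 3 + (e / 3 + e / 3) by lra.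
exact: eps_period_near h_d (eps_periodD h_tau2 (eps_periodN h_s2)) close.
Qed.

End CommonPeriods.

Lemma almost_periodicZ {R : realType} {n : nat} {S : Type} {V : normedModType R[i]}
    {A : set S} {a : 'rV[R]_n -> R[i]} {G : 'rV[R]_n * S -> V} {Ma MG : R} :
  uniformly_continuous a -> almost_periodic A (fun p => a p.1) ->
  almost_periodic A G ->
  (forall t s, A s -> `‖a t‖ <= Ma) -> (forall t s, A s -> `‖G (t, s)‖ <= MG) ->
  almost_periodic A (fun p => a p.1 *: G p).
Proof.
move=> a_uc a_ap G_ap a_bd G_bd e e_gt0.
pose C := `|Ma| + `|MG| + 1.
have C_gt0 : 0 < C by rewrite ltr_pwDr ?addr_ge0.
have eta_gt0 : 0 < e / C by rewrite divr_gt0.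
have [l l_gt0 common] := reldense_common_eps_periods G_ap a_ap a_uc _ eta_gt0.
exists l => // t0; have [tau tau_t0 [G_tau a_tau]] := common t0.
exists tau => // t s As /=; apply: le_trans (Re_distrZ _ _ _ _) _.
have a_t : `‖a t‖ <= `|Ma| := le_trans (a_bd t s As) (ler_norm _).
have G_t : `‖G (t + tau, s)‖ <= `|MG| := le_trans (G_bd _ s As) (ler_norm _).
have term1 : `‖a (t + tau) - a t‖ * `‖G (t + tau, s)‖ <= e / C * `|MG|.
  by apply: ler_pM; rewrite ?Re_normr_ge0 // (a_tau t s As).
have term2 : `‖a t‖ * `‖G (t + tau, s) - G (t, s)‖ <= `|Ma| * (e / C).
  by apply: ler_pM; rewrite ?Re_normr_ge0 // (G_tau t s As).
rewrite -[leRHS](divfK (lt0r_neq0 C_gt0)) /C !mulrDr mulr1.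
by rewrite [_ * `|Ma|]mulrC; lra.
Qed.

Lemma continuous_almost_periodic_bounded {R : realType} {n : nat}
    {S : topologicalType} {V : normedModType R[i]} {A : set S}
    {G : 'rV[R]_n * S -> V} :
  continuous G -> compact A -> almost_periodic A G ->
  exists M, forall t s, A s -> `‖G (t, s)‖ <= M.
Proof.
move=> G_cont A_compact /almost_periodic_bounded; apply=> r.
have [M GM] := continuous_compact_Re_norm_bounded G_cont
  (compact_setX (compact_norm_le r) A_compact).
by exists M => t s tr As; apply: GM.
Qed.

Section BohrAlmostPeriodic.
Context {R : realType} {n : nat}.

Lemma bohr_apP (f : 'rV[R]_n -> R[i]) : bohr_ap f <->
  continuous f /\ forall S (A : set S), almost_periodic A (fun p => f p.1).
Proof.
split=> [[f_cont f_ap] | [f_cont f_ap]]; split=> //.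
  move=> S A e /f_ap[l [l_gt0 Pl]]; apply/reldense_euclP.
  exists l; split=> // t0; have [tau [tau_t0 P]] := Pl t0.
  by exists tau; split=> // t s _; rewrite -ler_normr_Re; apply: P.
move=> e e_gt0.
have /reldense_euclP[l [l_gt0 Pl]] := f_ap unit [set: unit] e e_gt0.
exists l; split=> // t0; have [tau [tau_t0 P]] := Pl t0.
by exists tau; split=> // t; rewrite ler_normr_Re; apply: (P t tt).
Qed.

Lemma bohr_B_apP {X Y : normedModType R[i]} (BB : set (set X))
    (F : 'rV[R]_n * X -> Y) : bohr_B_ap BB F <->
  continuous F /\ forall B, BB B -> almost_periodic B F.
Proof.
split=> [[F_cont F_ap] | [F_cont F_ap]]; split=> // B BB_B e e_gt0.
  have [l [l_gt0 Pl]] := F_ap B BB_B e e_gt0; apply/reldense_euclP.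
  exists l; split=> // t0; have [tau [tau_t0 P]] := Pl t0.
  by exists tau; split=> // t x Bx; rewrite -ler_normr_Re; apply: P.
have /reldense_euclP[l [l_gt0 Pl]] := F_ap B BB_B e e_gt0.
exists l; split=> // t0; have [tau [tau_t0 P]] := Pl t0.
by exists tau; split=> // t x Bx; rewrite ler_normr_Re; apply: P.
Qed.

End BohrAlmostPeriodic.

Theorem proposition2p19 (R : realType) (n : nat)
    (X Y : completeNormedModType R[i]) (BB : set (set X))
    (f : 'rV[R]_n -> R[i]) (F : 'rV[R]_n * X -> Y) :
  (forall B, BB B -> compact B) ->
  (forall x : X, exists2 B, BB B & B x) ->
  bohr_ap f -> bohr_B_ap BB F ->
  bohr_B_ap BB (fun tx : 'rV[R]_n * X => f tx.1 *: F tx).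
Proof.
move=> BB_compact _ /bohr_apP[f_cont f_ap] /bohr_B_apP[F_cont F_ap].
have f1_cont : continuous (fun p : 'rV[R]_n * X => f p.1).
  by move=> p; apply: continuous_comp; [exact: cvg_fst | exact: f_cont].
apply/bohr_B_apP; split=> [p|B BB_B]; first exact: continuousZ (f1_cont p) (F_cont p).
have B_compact := BB_compact B BB_B.
have [Mf f_bd] := continuous_almost_periodic_bounded f1_cont B_compact (f_ap _ B).
have [MF F_bd] := continuous_almost_periodic_bounded F_cont B_compact (F_ap B BB_B).
have f_uc := almost_periodic_uniformly_continuous f_cont (f_ap _ [set: unit]).
exact: almost_periodicZ f_uc (f_ap _ B) (F_ap B BB_B) f_bd F_bd.
Qed.
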